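(* Let $p(x,y)$ be a real polynomial with $p(0,0)=0$, $\nabla p(0,0)=(0,0)$, $\dim\operatorname{Co}N_p=2$, such that for every $A\in\mathbb{N}^2$ the main $A$-quasi-homogeneous form of $p$ is nonnegative on $\mathbb{R}^2$. Let $A=(A_1,A_2)\in\mathcal{A}_p$ with $g_2^A(u_0)\neq0$ for all $u_0\in U_p(A)$, and let $x^{\chi_1}y^{\eta_1}$ be the monomial of the main term of $\varphi_2^A$. Then the following are equivalent: (i) for all $(x,y)$ with $\varphi_1^A(x,y)=0$, $x\neq0$, $y\neq0$ one has $\varphi_2^A(x,y)>0$; (ii) for every $u_0\in U_p(A)$ the system $x\neq0$, $y\neq0$, $x^{-A_2}y^{A_1}=u_0$, $x^{\chi_1}y^{\eta_1}g_2^A(u_0)<0$ has no real solution.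
   Context: $\mathbb{N}=\{1,2,\dots\}$; $\mathbb{N}_0^2$ is the set of $(A_1,A_2)\in\mathbb{N}^2$ with $\gcd(A_1,A_2)=1$. $N_p$ is the support of $p$ and $\operatorname{Co}N_p$ its convex hull. For $A\in\mathbb{N}^2$ the main $A$-quasi-homogeneous form of $p$ is the sum of the terms of $p$ whose exponent vectors $k$ minimize $\langle A,k\rangle$ over $N_p$. For $A\in\mathbb{N}_0^2$, with $B_1^A<B_2^A<\dots$ the distinct values of $\langle A,k\rangle$ on $N_p$, $\varphi_i^A$ is the sum of terms of $p$ with $\langle A,k\rangle=B_i^A$. For such a form $\sum_i c_ix^{\gamma_i}y^{\delta_i}$ ($c_i\ne0$, $\gamma_1>\gamma_2>\dots$), its main term is $c_1x^{\gamma_1}y^{\delta_1}$ and its characteristic polynomial is $\sum_ic_iu^{(\gamma_1-\gamma_i)/A_2}$; $g_1^A,g_2^A$ are those of $\varphi_1^A,\varphi_2^A$. $\mathcal{A}_p$ is the set of $A\in\mathbb{N}_0^2$ such that $\varphi_1^A$ has at least three terms, $g_1^A\ge0$ on $\mathbb{R}$, and $g_1^A$ has a real root; $U_p(A)$ is the set of real roots of $g_1^A$. *)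

(* A bivariate real polynomial p(x,y) is represented as
   p : {poly {poly R}}, a polynomial in y whose coefficients are polynomials
   in x: the coefficient of x^i y^j is  p`_j`_i . *)
From HB Require Import structures.
From mathcomp Require Import all_boot all_order all_algebra.
From mathcomp Require Import reals.
Set Implicit Arguments. Unset Strict Implicit. Unset Printing Implicit Defensive.
Import Order.TTheory GRing.Theory Num.Theory.
Local Open Scope ring_scope.

Section Bivariate.
Variable R : realType.
Implicit Types (f p : {poly {poly R}}).

Definition coef2 f (i j : nat) : R := f`_j`_i.

Definition eval2 f (x y : R) : R := (map_poly (fun q : {poly R} => q.[x]) f).[y].

Definition supp2 f : seq (nat * nat) :=
  flatten [seq [seq (i, j) | i <- iota 0 (size f`_j) & f`_j`_i != 0]
          | j <- iota 0 (size f)].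

Definition nterms f : nat := (\sum_(q <- f) count (fun c : R => c != 0%R) (polyseq q))%N.

(* dim Co N_f = 2 : N_f contains three affinely independent points *)
Definition hull_dim2 f : Prop :=
  exists k1 k2 k3, [/\ k1 \in supp2 f, k2 \in supp2 f, k3 \in supp2 f &
    ((k2.1%:Z - k1.1%:Z) * (k3.2%:Z - k1.2%:Z)
       - (k2.2%:Z - k1.2%:Z) * (k3.1%:Z - k1.1%:Z) != 0)%R].

Definition wdeg (A1 A2 : nat) (k : nat * nat) : nat := (A1 * k.1 + A2 * k.2)%N.

Definition qform f (A1 A2 B : nat) : {poly {poly R}} :=
  \poly_(j < size f) \poly_(i < size f`_j)
     (if wdeg A1 A2 (i, j) == B then f`_j`_i else 0).

Definition levels f (A1 A2 : nat) : seq nat :=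
  sort leq (undup [seq wdeg A1 A2 k | k <- supp2 f]).

(* B_i^A (1-indexed) and phi_i^A *)
Definition Blev f (A1 A2 : nat) (i : nat) : nat := nth 0%N (levels f A1 A2) i.-1.
Definition phi f (A1 A2 : nat) (i : nat) := qform f A1 A2 (Blev f A1 A2 i).

Definition mainform f (A1 A2 : nat) := phi f A1 A2 1.

(* for a form f = sum c_i x^gamma_i y^delta_i: gamma_1 (largest x-exponent),
   the y-exponent of the main term, and the characteristic polynomial *)
Definition gamma1 f : nat := \max_(k <- supp2 f) k.1.
Definition eta1 f : nat :=
  \max_(k <- supp2 f | k.1 == gamma1 f) k.2.
Definition charpoly f (A2 : nat) : {poly R} :=
  \sum_(k <- supp2 f) f`_k.2`_k.1 *: 'X^((gamma1 f - k.1) %/ A2).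

Definition gA f (A1 A2 : nat) (i : nat) : {poly R} := charpoly (phi f A1 A2 i) A2.

Definition N02 (A1 A2 : nat) : bool := [&& (0 < A1)%N, (0 < A2)%N & coprime A1 A2].

Definition inAp p (A1 A2 : nat) : Prop :=
  [/\ N02 A1 A2, (3 <= nterms (phi p A1 A2 1))%N,
      (forall u : R, 0 <= (gA p A1 A2 1).[u]) &
      exists u : R, root (gA p A1 A2 1) u].

Definition Up p (A1 A2 : nat) (u : R) : bool := root (gA p A1 A2 1) u.

End Bivariate.

(* On the monomials of a form that is A-quasi-homogeneous of degree B, the
   exponents (i, j) satisfy A1 i + A2 j = B; for coprime A1, A2 they differ
   from those (gamma, eta) of the main term by integer multiples of (-A2, A1).
   Hence for x, y <> 0 the form factors as x^gamma y^eta g(x^-A2 y^A1), with g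
   its characteristic polynomial.  On the torus x y <> 0, phi_1 vanishes exactly
   when x^-A2 y^A1 is a root of g_1, i.e. lies in U_p(A), and there the sign of
   phi_2 is the sign of x^chi y^eta g_2(u0); this gives the equivalence. *)
From HB Require Import structures.
From mathcomp Require Import all_boot all_order all_algebra.
From mathcomp Require Import reals.
From mathcomp Require Import zify ring.
Import Order.TTheory GRing.Theory Num.Theory.
Local Open Scope ring_scope.

Section QuasiHomogeneousFactorization.
Set Implicit Arguments. Unset Strict Implicit.

Lemma bigmax_seq_attained (I : eqType) (r : seq I) (F : I -> nat) :
  r != [::] -> exists2 i, i \in r & (\max_(j <- r) F j)%N = F i.
Proof.
elim: r => // a [|b s] IH _; rewrite big_cons.
  by exists a; rewrite ?mem_head // big_nil maxn0.
have [i si ->] := IH isT.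
case: leqP => _.
- by exists i; rewrite // in_cons si orbT.
- by exists a; rewrite ?mem_head.
Qed.

Lemma weighted_line_step (A1 A2 i j i' j' : nat) :
  (0 < A2)%N -> coprime A1 A2 -> (i <= i')%N ->
  (A1 * i + A2 * j = A1 * i' + A2 * j')%N ->
  (i' = i + A2 * ((i' - i) %/ A2))%N /\ (j = j' + A1 * ((i' - i) %/ A2))%N.
Proof.
move=> A2_gt0 coA ii' line; set m := ((i' - i) %/ A2)%N.
have jj' : (j' <= j)%N by rewrite -(leq_pmul2l A2_gt0); nia.
have shift : (A1 * (i' - i) = A2 * (j - j'))%N by rewrite !mulnBr; lia.
have dvd_i : (A2 %| i' - i)%N.
  have coA' : coprime A2 A1 by rewrite coprime_sym.
  by rewrite -(Gauss_dvdr _ coA') shift dvdn_mulr.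
have i'E : (i' - i = A2 * m)%N by rewrite /m mulnC divnK.
split; first by lia.
suff : (A2 * (j - j') = A2 * (A1 * m))%N by move/eqP; rewrite eqn_pmul2l //; lia.
by rewrite -shift i'E mulnCA.
Qed.

Lemma monomial_shift (F : fieldType) (x y : F) (i j a b m : nat) : x != 0 ->
  x ^+ (i + a * m) * y ^+ j * (x ^- a * y ^+ b) ^+ m = x ^+ i * y ^+ (j + b * m).
Proof.
move=> x_neq0; rewrite exprMn exprVn -!exprM !exprD.
have xam_neq0 : x ^+ (a * m) != 0 by rewrite expf_neq0.
by field.
Qed.

Variable R : realType.
Implicit Types f p : {poly {poly R}}.

Lemma eval2_supp2 f x y :
  eval2 f x y = \sum_(k <- supp2 f) f`_k.2`_k.1 * (x ^+ k.1 * y ^+ k.2).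
Proof.
rewrite /eval2 /supp2 big_flatten /= big_map.
rewrite (@horner_coef_wide _ (size f)) ?size_poly //.
rewrite -(subn0 (size f)) -/(index_iota 0 (size f)) big_mkord subn0.
apply: eq_bigr => j _; rewrite coef_map_id0 ?horner0 // big_map big_filter.
rewrite (horner_coef_wide _ (leqnn (size f`_j))).
rewrite -(subn0 (size f`_j)) -/(index_iota 0 (size f`_j)) big_mkord subn0.
rewrite mulr_suml [RHS]big_mkcond /=; apply: eq_bigr => i _.
by case: eqP => [->|_]; rewrite ?mul0r // mulrA.
Qed.

Lemma supp2_coef_neq0 f k : k \in supp2 f -> f`_k.2`_k.1 != 0.
Proof.
move/flattenP=> [s /mapP [j _ ->]] /mapP [i].
by rewrite mem_filter => /andP [nz _] ->.
Qed.

Lemma horner_charpoly f A2 u : (charpoly f A2).[u] =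
  \sum_(k <- supp2 f) f`_k.2`_k.1 * u ^+ ((gamma1 f - k.1) %/ A2).
Proof.
rewrite /charpoly horner_sum; apply: eq_bigr => k _.
by rewrite hornerZ hornerXn.
Qed.

Lemma wdeg_supp2_qform p A1 A2 B k :
  k \in supp2 (qform p A1 A2 B) -> wdeg A1 A2 k = B.
Proof.
case: k => i j /supp2_coef_neq0 /=.
rewrite /qform coef_poly; case: ifP => _; last by rewrite coef0 eqxx.
rewrite coef_poly; case: ifP => _; last by rewrite eqxx.
by case: (wdeg A1 A2 (i, j) =P B) => // _; rewrite eqxx.
Qed.

Section QuasiHomogeneous.
Variables (f : {poly {poly R}}) (A1 A2 B : nat).
Hypotheses (A2_gt0 : (0 < A2)%N) (coA : coprime A1 A2).
Hypothesis wdeg_supp : forall k, k \in supp2 f -> wdeg A1 A2 k = B.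

Lemma main_term_supp2 k : k \in supp2 f -> (gamma1 f, eta1 f) \in supp2 f.
Proof.
move=> ks; have [k' k's gammaE] : exists2 k', k' \in supp2 f & gamma1 f = k'.1.
  apply: (@bigmax_seq_attained _ _ (fun k : nat * nat => k.1)).
  by apply: contraTneq ks => ->.
suff etaE : eta1 f = k'.2 by rewrite gammaE etaE -surjective_pairing.
apply/eqP; rewrite eqn_leq; apply/andP; split.
- apply/bigmax_leqP_seq => k'' k''s /eqP k''1.
  rewrite -(leq_pmul2l A2_gt0).
  move: (wdeg_supp k''s) (wdeg_supp k's); rewrite /wdeg k''1 gammaE => <- /eqP.
  by rewrite eqn_add2l => /eqP ->.
- by apply: (@leq_bigmax_seq _ _ _ (fun k : nat * nat => k.2)) => //; rewrite gammaE.
Qed.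

Lemma eval2_qhomog x y : x != 0 ->
  eval2 f x y = x ^+ gamma1 f * y ^+ eta1 f * (charpoly f A2).[x ^- A2 * y ^+ A1].
Proof.
move=> x_neq0; rewrite eval2_supp2 horner_charpoly mulr_sumr !big_seq.
apply: eq_bigr => k ks; rewrite [RHS]mulrCA; congr (_ * _).
have k1_le : (k.1 <= gamma1 f)%N.
  exact: (@leq_bigmax_seq _ _ _ (fun k : nat * nat => k.1)).
have line : (A1 * k.1 + A2 * k.2 = A1 * gamma1 f + A2 * eta1 f)%N.
  by move: (wdeg_supp ks) (wdeg_supp (main_term_supp2 ks)); rewrite /wdeg => -> ->.
set m := ((gamma1 f - k.1) %/ A2)%N.
have [gammaE k2E] := weighted_line_step A2_gt0 coA k1_le line.
by rewrite -/m in gammaE k2E; rewrite k2E gammaE monomial_shift.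
Qed.

End QuasiHomogeneous.

Lemma eval2_phi p A1 A2 i x y : (0 < A2)%N -> coprime A1 A2 -> x != 0 ->
  eval2 (phi p A1 A2 i) x y = x ^+ gamma1 (phi p A1 A2 i) * y ^+ eta1 (phi p A1 A2 i)
    * (gA p A1 A2 i).[x ^- A2 * y ^+ A1].
Proof.
move=> A2_gt0 coA.
by apply: (eval2_qhomog (B := Blev p A1 A2 i)) => // k /wdeg_supp2_qform.
Qed.

End QuasiHomogeneousFactorization.

Theorem corollary1 (R : realType) (p : {poly {poly R}}) (A1 A2 : nat) :
  coef2 p 0 0 = 0 ->
  coef2 p 1 0 = 0 -> coef2 p 0 1 = 0 ->
  hull_dim2 p ->
  (forall B1 B2 : nat, (0 < B1)%N -> (0 < B2)%N ->
     forall x y : R, 0 <= eval2 (mainform p B1 B2) x y) ->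
  inAp p A1 A2 ->
  (forall u0 : R, Up p A1 A2 u0 -> (gA p A1 A2 2).[u0] != 0) ->
  let chi1 := gamma1 (phi p A1 A2 2) in
  let eta := eta1 (phi p A1 A2 2) in
  (forall x y : R, eval2 (phi p A1 A2 1) x y = 0 -> x != 0 -> y != 0 ->
       0 < eval2 (phi p A1 A2 2) x y)
  <->
  (forall u0 : R, Up p A1 A2 u0 ->
     ~ exists x y : R, [/\ x != 0, y != 0, x ^- A2 * y ^+ A1 = u0 &
                          x ^+ chi1 * y ^+ eta * (gA p A1 A2 2).[u0] < 0]).
Proof.
move=> _ _ _ _ _ [/and3P [_ A2_gt0 coA] _ _ _] g2_neq0 chi1 eta.
have phiE i x y := @eval2_phi R p A1 A2 i x y A2_gt0 coA.
split=> [phi2_pos u0 u0_root [x [y [x_neq0 y_neq0 uE phi2_neg]]] |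
         no_sol x y phi1_0 x_neq0 y_neq0].
- have := phi2_pos x y; rewrite !phiE // uE (rootP u0_root) mulr0.
  by move=> /(_ erefl x_neq0 y_neq0); rewrite ltNge ltW.
- have mono_neq0 i : x ^+ gamma1 (phi p A1 A2 i) * y ^+ eta1 (phi p A1 A2 i) != 0.
    by rewrite mulf_neq0 ?expf_neq0.
  have u_root : Up p A1 A2 (x ^- A2 * y ^+ A1).
    by move/eqP: phi1_0; rewrite phiE // mulf_eq0 (negbTE (mono_neq0 1%N)).
  rewrite phiE // lt_def mulf_neq0 ?mono_neq0 ?(g2_neq0 _ u_root) //= leNgt.
  by apply/negP => phi2_neg; apply: (no_sol _ u_root); exists x, y.
Qed.
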